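(* Let $N_1,\dots,N_K,M_1,\dots,M_K\ge1$ be integers such that $\mathcal N_{\mathrm{Var}}(\mathcal T_{\mathrm{RX}},\mathcal T_{\mathrm{TX}})\ge\mathcal N_{\mathrm{Eq}}(\mathcal T_{\mathrm{RX}},\mathcal T_{\mathrm{TX}})$ for all $\mathcal T_{\mathrm{RX}},\mathcal T_{\mathrm{TX}}\subseteq\mathcal K$, and let $\mathcal S_{\mathrm{RX}},\mathcal S_{\mathrm{TX}}\subseteq\mathcal K$ satisfy $\mathcal N_{\mathrm{Var}}(\mathcal S_{\mathrm{RX}},\mathcal S_{\mathrm{TX}})=\mathcal N_{\mathrm{Eq}}(\mathcal S_{\mathrm{RX}},\mathcal S_{\mathrm{TX}})$. Then for all $\mathcal S'_{\mathrm{RX}},\mathcal S'_{\mathrm{TX}}\subseteq\mathcal K$ with $\mathcal S'_{\mathrm{RX}}\cap\mathcal S_{\mathrm{RX}}=\emptyset$ and $\mathcal S'_{\mathrm{TX}}\cap\mathcal S_{\mathrm{TX}}=\emptyset$, $$\mathcal N_{\mathrm{Var}}(\mathcal S'_{\mathrm{RX}},\mathcal S'_{\mathrm{TX}})\ \ge\ \mathcal N_{\mathrm{Eq}}(\mathcal S_{\mathrm{RX}},\mathcal S'_{\mathrm{TX}})+\mathcal N_{\mathrm{Eq}}(\mathcal S'_{\mathrm{RX}},\mathcal S_{\mathrm{TX}})+\mathcal N_{\mathrm{Eq}}(\mathcal S'_{\mathrm{RX}},\mathcal S'_{\mathrm{TX}}).$$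
   Context: $\mathcal K=\{1,\dots,K\}$. For $\mathcal A,\mathcal B\subseteq\mathcal K$: $\mathcal N_{\mathrm{Var}}(\mathcal A,\mathcal B)=\sum_{i\in\mathcal A}(N_i-1)+\sum_{i\in\mathcal B}(M_i-1)$ and $\mathcal N_{\mathrm{Eq}}(\mathcal A,\mathcal B)=\#\{(j,k): j\in\mathcal A,k\in\mathcal B,j\ne k\}$. *)

(* Users K = {1..K} are modelled by 'I_K = {0..K-1}. *)
From mathcomp Require Import all_boot.
Set Implicit Arguments. Unset Strict Implicit. Unset Printing Implicit Defensive.

(* N_Var(A,B) = sum_{i in A} (N_i - 1) + sum_{i in B} (M_i - 1)
   (nat subtraction is exact since N_i, M_i >= 1 in the theorem) *)
Definition NVar (K : nat) (N M : 'I_K -> nat) (A B : {set 'I_K}) : nat :=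
  (\sum_(i in A) (N i - 1) + \sum_(i in B) (M i - 1))%N.

Definition NEq (K : nat) (A B : {set 'I_K}) : nat :=
  #|[set p : 'I_K * 'I_K | (p.1 \in A) && (p.2 \in B) && (p.1 != p.2)]|.

From mathcomp Require Import all_boot zify.

(* Both counting functions are additive under disjoint unions
   in each argument: NVar is a sum of two set-indexed sums, and NEq counts
   ordered pairs in (A x B) off the diagonal, so splitting A (or B) into
   disjoint pieces splits the set of pairs into disjoint pieces.  Apply the
   global hypothesis NEq <= NVar to the enlarged pair
   (SRX u SRX', STX u STX'): expanding both sides additively, the terms
   NVar(SRX, STX) and NEq(SRX, STX) cancel by the tightness hypothesis, and
   the remaining inequality is exactly the claim. *)

Definition offdiag_pairs {K : nat} (A B : {set 'I_K}) : {set 'I_K * 'I_K} :=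
  [set p | (p.1 \in A) && (p.2 \in B) && (p.1 != p.2)].

Lemma NEqE {K : nat} (A B : {set 'I_K}) : NEq A B = #|offdiag_pairs A B|.
Proof. by []. Qed.

Lemma offdiag_pairsUl {K : nat} (A A' B : {set 'I_K}) :
  offdiag_pairs (A :|: A') B = offdiag_pairs A B :|: offdiag_pairs A' B.
Proof. by apply/setP=> p; rewrite !inE !andb_orl. Qed.

Lemma offdiag_pairsUr {K : nat} (A B B' : {set 'I_K}) :
  offdiag_pairs A (B :|: B') = offdiag_pairs A B :|: offdiag_pairs A B'.
Proof. by apply/setP=> p; rewrite !inE andb_orr !andb_orl. Qed.

Lemma offdiag_pairs_disjointl {K : nat} (A A' B B' : {set 'I_K}) :
  A' :&: A = set0 -> offdiag_pairs A B :&: offdiag_pairs A' B' = set0.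
Proof.
move=> disA; apply/setP=> p; rewrite !inE.
have : p.1 \notin A' :&: A by rewrite disA inE.
by rewrite inE; case: (p.1 \in A); case: (p.1 \in A'); rewrite ?andbF.
Qed.

Lemma offdiag_pairs_disjointr {K : nat} (A A' B B' : {set 'I_K}) :
  B' :&: B = set0 -> offdiag_pairs A B :&: offdiag_pairs A' B' = set0.
Proof.
move=> disB; apply/setP=> p; rewrite !inE.
have : p.2 \notin B' :&: B by rewrite disB inE.
by rewrite inE; case: (p.2 \in B); case: (p.2 \in B'); rewrite ?andbF.
Qed.

Lemma cardsU_disjoint (T : finType) (X Y : {set T}) :
  X :&: Y = set0 -> #|X :|: Y| = #|X| + #|Y|.
Proof. by move=> dis; rewrite -cardsUI dis cards0 addn0. Qed.

Lemma NEqUl {K : nat} (A A' B : {set 'I_K}) :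
  A' :&: A = set0 -> NEq (A :|: A') B = NEq A B + NEq A' B.
Proof.
move=> disA; rewrite !NEqE offdiag_pairsUl cardsU_disjoint //.
exact: offdiag_pairs_disjointl.
Qed.

Lemma NEqUr {K : nat} (A B B' : {set 'I_K}) :
  B' :&: B = set0 -> NEq A (B :|: B') = NEq A B + NEq A B'.
Proof.
move=> disB; rewrite !NEqE offdiag_pairsUr cardsU_disjoint //.
exact: offdiag_pairs_disjointr.
Qed.

Lemma sum_setU_disjoint (T : finType) (F : T -> nat) (A A' : {set T}) :
  A' :&: A = set0 -> \sum_(i in A :|: A') F i = \sum_(i in A) F i + \sum_(i in A') F i.
Proof.
move=> dis; rewrite -bigU /=; last by rewrite -setI_eq0 setIC dis.
by apply: eq_bigl => i; rewrite !inE.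
Qed.

Lemma NVarU {K : nat} (N M : 'I_K -> nat) (A A' B B' : {set 'I_K}) :
  A' :&: A = set0 -> B' :&: B = set0 ->
  NVar N M (A :|: A') (B :|: B') = NVar N M A B + NVar N M A' B'.
Proof.
move=> disA disB; rewrite /NVar !sum_setU_disjoint //.
by rewrite addnACA.
Qed.

Theorem mainTheorem5 (K : nat) (N M : 'I_K -> nat)
  (hN : forall i, 1 <= N i) (hM : forall i, 1 <= M i)
  (hprop : forall TRX TTX : {set 'I_K}, NEq TRX TTX <= NVar N M TRX TTX)
  (SRX STX : {set 'I_K})
  (hS : NVar N M SRX STX = NEq SRX STX) :
  forall SRX' STX' : {set 'I_K},
    SRX' :&: SRX = set0 -> STX' :&: STX = set0 ->
    NEq SRX STX' + NEq SRX' STX + NEq SRX' STX' <= NVar N M SRX' STX'.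
Proof.
move=> SRX' STX' disRX disTX.
have := hprop (SRX :|: SRX') (STX :|: STX').
rewrite NVarU // hS NEqUl // !NEqUr //.
lia.
Qed.
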